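(* Let $\langle A,\to\rangle$ be a conditional algebra and let $B$ be (the domain of) a Boolean subalgebra of $A$. Then the following are equivalent: (1) $E_B$ is a C-equivalence on the expanded Stone space $\langle\mathrm{Ul}(A),\tau_s,T_A\rangle$; (2) $B$ is closed under $\to$, i.e., $\langle B,\to\rangle$ is a subalgebra of $\langle A,\to\rangle$.
   Context: A conditional algebra is $\langle A,\to\rangle$ with $A$ a Boolean algebra and $\to$ binary with $a\to1=1$, $(a\to b)\wedge(a\to c)=a\to(b\wedge c)$, $(a\vee b)\to c\le(a\to c)\wedge(b\to c)$. $\mathrm{Ul}(A)$ is the Stone space of ultrafilters (closed sets are exactly the sets $\varphi(F)=\{u:F\subseteq u\}$, $F$ a filter, the improper filter $A$ included). $D^{\to}_u(F)=\{b:\exists a\in F,\ a\to b\in u\}$; $T_A(u,Z,v)$ iff there is a filter $F$ with $Z=\varphi(F)$ and $D^{\to}_u(F)\subseteq v$. $E_B=\{(u,v)\in\mathrm{Ul}(A)^2: u\cap B=v\cap B\}$. For an equivalence $E$ on a space $X$ with relation $T$ and closed sets $Y,C$: $Y\preceq_E C$ iff for every $y\in Y$ there is $x\in C$ with $E(x,y)$. $E$ is a C-equivalence if $E$ is a Boolean equivalence (for each $(x,y)\notin E$ there is a clopen set closed under $E$ containing $x$ but not $y$) and for all $x,x',y\in X$ and closed $Y$, if $E(x,y)$ and $T(x,Y,x')$ then there exist $y'$ with $E(x',y')$ and closed $C$ with $T(y,C,y')$ and $C\preceq_E Y$. *)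

(* Boolean algebras as complemented distributive lattices
   (ctbDistrLatticeType) from mathcomp's order library. *)
From HB Require Import structures.
From mathcomp Require Import all_boot all_order.
Set Implicit Arguments. Unset Strict Implicit. Unset Printing Implicit Defensive.
Import Order.Theory.
Local Open Scope order_scope.

Section BooleanAlgebra.
Context {disp : Order.disp_t} {A : ctbDistrLatticeType disp}.

Definition conditional_algebra (imp : A -> A -> A) : Prop :=
  [/\ forall a, imp a \top = \top,
      forall a b c, imp a b `&` imp a c = imp a (b `&` c)
    & forall a b c, imp (a `|` b) c <= imp a c `&` imp b c].

Definition boolean_subalgebra (B : A -> Prop) : Prop :=
  [/\ B \bot, B \top,
      forall a b, B a -> B b -> B (a `&` b),
      forall a b, B a -> B b -> B (a `|` b)
    & forall a, B a -> B (~` a)].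

(* Filters (the improper filter A included). *)
Definition is_filter (F : A -> Prop) : Prop :=
  [/\ F \top,
      forall a b, F a -> a <= b -> F b
    & forall a b, F a -> F b -> F (a `&` b)].

Definition proper_filter (F : A -> Prop) : Prop := is_filter F /\ ~ F \bot.

Definition is_ultrafilter (u : A -> Prop) : Prop :=
  proper_filter u /\
  forall G, proper_filter G -> (forall a, u a -> G a) -> forall a, G a -> u a.

End BooleanAlgebra.

Record Ul {disp : Order.disp_t} (A : ctbDistrLatticeType disp) := mkUl {
  uset :> A -> Prop;
  uset_ultra : is_ultrafilter uset }.

Section Stone.
Context {disp : Order.disp_t} {A : ctbDistrLatticeType disp}.

Definition phi (F : A -> Prop) : Ul A -> Prop := fun u => forall a, F a -> u a.

Definition stone_closed (Z : Ul A -> Prop) : Prop :=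
  exists F, is_filter F /\ Z = phi F.
Definition stone_open (Z : Ul A -> Prop) : Prop :=
  stone_closed (fun u => ~ Z u).
Definition stone_clopen (Z : Ul A -> Prop) : Prop :=
  stone_closed Z /\ stone_open Z.

Definition Dimp (imp : A -> A -> A) (u : Ul A) (F : A -> Prop) : A -> Prop :=
  fun b => exists2 a, F a & u (imp a b).

Definition T_A (imp : A -> A -> A) (u : Ul A) (Z : Ul A -> Prop) (v : Ul A) : Prop :=
  exists F, [/\ is_filter F, Z = phi F & forall b, Dimp imp u F b -> v b].

Definition E_B (B : A -> Prop) (u v : Ul A) : Prop :=
  forall a, B a -> (u a <-> v a).

End Stone.

Section CEquiv.
Variable X : Type.
Variable closed clopen : (X -> Prop) -> Prop.
Variable T : X -> (X -> Prop) -> X -> Prop.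
Variable E : X -> X -> Prop.

Definition E_preceq (Y C : X -> Prop) : Prop :=
  forall y, Y y -> exists2 x, C x & E x y.

Definition E_closed_set (U : X -> Prop) : Prop :=
  forall x y, E x y -> U x -> U y.

Definition boolean_equivalence : Prop :=
  forall x y, ~ E x y ->
    exists U, [/\ clopen U, E_closed_set U, U x & ~ U y].

Definition C_equivalence : Prop :=
  [/\ (forall x, E x x) /\ (forall x y, E x y -> E y x) /\
        (forall x y z, E x y -> E y z -> E x z),
      boolean_equivalence
    & forall x x' y Y, closed Y -> E x y -> T x Y x' ->
        exists y', E x' y' /\
          exists C, [/\ closed C, T y C y' & E_preceq C Y]].
End CEquiv.

From mathcomp Require Import all_boot all_order.
From mathcomp Require Import boolp classical_sets.

(* (2) => (1): the clopen sets phi(up a), a in B, are E_B-saturated and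
   separate E_B-classes, so E_B is Boolean.  For the back-and-forth condition,
   given E_B x y and T_A(x, phi F, x'), take C = phi F_B, where F_B is the
   filter generated by the elements of F lying in B.  Since B is closed under
   ->, every element of B in D_y(F_B) already lies in D_x(F), hence in x'; so
   D_y(F_B) is compatible with the B-part of x' and extends to an ultrafilter y'
   with E_B x' y'.
   (1) => (2): if c = a -> b is not in B for a, b in B, choose an ultrafilter y
   containing ~c and every element of B above c, and an x containing c with
   E_B y x.  An ultrafilter y' containing D_y(up a) and ~b gives
   T_A(y, phi(up a), y'); the back-and-forth condition returns y'' with
   E_B y' y'' and a filter G whose ultrafilters all contain a, hence a in G.
   Then b is in D_x(G), which lies in y'', so b is in y', a contradiction. *)

Set Implicit Arguments. Unset Strict Implicit. Unset Printing Implicit Defensive.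
Import Order.Theory.
Local Open Scope order_scope.

Section Filters.
Context {disp : Order.disp_t} {A : ctbDistrLatticeType disp}.
Implicit Types (F G : A -> Prop) (a b : A) (u : Ul A).

Lemma filterT F : is_filter F -> F \top.
Proof. by case. Qed.

Lemma filter_le F a b : is_filter F -> F a -> a <= b -> F b.
Proof. by case=> _ + _; apply. Qed.

Lemma filterI F a b : is_filter F -> F a -> F b -> F (a `&` b).
Proof. by case=> _ _; apply. Qed.

Definition up a : A -> Prop := fun b => a <= b.

Lemma up_filter a : is_filter (up a).
Proof.
rewrite /up; split=> [|x y ax|x y ax ay]; first exact: lex1.
  exact: le_trans.
by rewrite lexI ax ay.
Qed.

Definition filter_sup F1 F2 : A -> Prop :=
  fun b => exists f1 f2, [/\ F1 f1, F2 f2 & f1 `&` f2 <= b].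

Lemma filter_sup_filter F1 F2 :
  is_filter F1 -> is_filter F2 -> is_filter (filter_sup F1 F2).
Proof.
move=> F1f F2f; split.
- by exists \top, \top; split; [exact: filterT|exact: filterT|exact: lex1].
- move=> x y [f1 [f2 [F1f1 F2f2 f12x]]] xy.
  by exists f1, f2; split=> //; apply: le_trans xy.
- move=> x y [f1 [f2 [F1f1 F2f2 f12x]]] [g1 [g2 [F1g1 F2g2 g12y]]].
  exists (f1 `&` g1), (f2 `&` g2); split; [exact: filterI|exact: filterI|].
  rewrite lexI; apply/andP; split.
  + by apply: le_trans f12x; apply: leI2; apply: leIl.
  + by apply: le_trans g12y; apply: leI2; apply: leIr.
Qed.

Lemma filter_supl F1 F2 a : is_filter F2 -> F1 a -> filter_sup F1 F2 a.
Proof. by move=> F2f F1a; exists a, \top; split; [|exact: filterT|exact: leIl]. Qed.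

Lemma filter_supr F1 F2 a : is_filter F1 -> F2 a -> filter_sup F1 F2 a.
Proof. by move=> F1f F2a; exists \top, a; split; [exact: filterT| |exact: leIr]. Qed.

Lemma proper_filter_chain_union F (Fam : set (set A)) :
  proper_filter F -> (Fam `<=` fun G => proper_filter (F `|` G))%classic ->
  total_on Fam subset -> proper_filter (F `|` \bigcup_(G in Fam) G)%classic.
Proof.
set U := (F `|` _)%classic => -[Ff Fbot] FamP Famtot.
have common a b : U a -> U b ->
    exists2 H, proper_filter H /\ (H `<=` U)%classic & H a /\ H b.
  have sub G : Fam G -> (F `|` G `<=` U)%classic.
    by move=> FamG x [Fx|Gx]; [left|right; exists G].
  case=> [Fa|[G1 FamG1 G1a]] [Fb|[G2 FamG2 G2b]].
  - by exists F; split=> // x; left.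
  - by exists (F `|` G2)%classic; split; [exact: FamP|exact: sub|left|right].
  - by exists (F `|` G1)%classic; split; [exact: FamP|exact: sub|right|left].
  - have [G12|G21] := Famtot _ _ FamG1 FamG2.
    + exists (F `|` G2)%classic; split; [exact: FamP|exact: sub|right|right] => //.
      exact: G12.
    + exists (F `|` G1)%classic; split; [exact: FamP|exact: sub|right|right] => //.
      exact: G21.
split; first split.
- by left; apply: filterT.
- move=> a b Ua ab; have [H [[Hf _] HU] [Ha _]] := common a a Ua Ua.
  exact/HU/(filter_le Hf Ha).
- move=> a b Ua Ub; have [H [[Hf _] HU] [Ha Hb]] := common a b Ua Ub.
  exact/HU/(filterI Hf Ha Hb).
- by move=> Ubot; have [H [[_ Hbot] _] [Hb _]] := common _ _ Ubot Ubot.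
Qed.

(* Zorn's lemma is applied to the sets G making F `|` G a proper filter,
   so that the empty chain needs no special treatment. *)
Lemma ultra_extend F : proper_filter F -> exists u : Ul A, phi F u.
Proof.
move=> PF; have [M [PM maxM]] :=
  Zorn_bigcup (fun Fam => proper_filter_chain_union PF (Fam := Fam)).
have Mu : is_ultrafilter (F `|` M)%classic.
  split=> // G PG FMG a Ga; apply: contrapT => nFMa.
  apply: (maxM G).
    by split=> [x Mx|GM]; [apply: FMG; right|apply/nFMa; right; apply: GM].
  by rewrite setUidr // => x Fx; apply: FMG; left.
by exists (mkUl Mu) => a Fa; left.
Qed.

Lemma ultra_sup F1 F2 : is_filter F1 -> is_filter F2 ->
  (forall f1 f2, F1 f1 -> F2 f2 -> ~ f1 <= ~` f2) ->
  exists u : Ul A, phi F1 u /\ phi F2 u.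
Proof.
move=> F1f F2f compat.
have [u supu] : exists u : Ul A, phi (filter_sup F1 F2) u.
  apply: ultra_extend; split; first exact: filter_sup_filter.
  move=> [f1 [f2 [F1f1 F2f2]]]; rewrite lex0 disj_leC; exact: compat.
by exists u; split=> a Fa; apply: supu; [apply: filter_supl|apply: filter_supr].
Qed.

Lemma ultra_up F a : is_filter F -> (forall f, F f -> ~ f <= ~` a) ->
  exists u : Ul A, phi F u /\ u a.
Proof.
move=> Ff compat.
have [u [Fu au]] : exists u : Ul A, phi F u /\ phi (up a) u.
  apply: ultra_sup (up_filter a) _ => // f1 f2 F1f1 af2 f12.
  by apply: (compat _ F1f1); rewrite (le_trans f12) // leC.
by exists u; split=> //; apply: au; rewrite /up.
Qed.

Lemma ultra_filter u : is_filter u.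
Proof. exact: (uset_ultra u).1.1. Qed.

Lemma ultra_bot u : ~ u \bot.
Proof. exact: (uset_ultra u).1.2. Qed.

Lemma ultra_compl u a : u (~` a) <-> ~ u a.
Proof.
split=> [uCa ua|nua].
  by apply: (@ultra_bot u); rewrite -(meetxC a); apply: filterI (ultra_filter u) _ _.
apply: contrapT => nuCa; apply: nua.
have [[uf _] umax] := uset_ultra u.
apply: (umax (filter_sup u (up a))); last exact/filter_supr/lexx.
- split; first exact/filter_sup_filter/up_filter.
  move=> [f1 [f2 [uf1 af2]]]; rewrite lex0 disj_leC => f12; apply: nuCa.
  by apply: filter_le uf uf1 (le_trans f12 _); rewrite leC.
- by move=> b ub; apply/filter_supl/ub/up_filter.
Qed.

Lemma phi_up a u : phi (up a) u <-> u a.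
Proof.
split=> [|ua b ab]; first by apply; rewrite /up.
exact: filter_le (ultra_filter u) ua ab.
Qed.

Lemma filter_of_phi_sub G a : is_filter G -> (forall u, phi G u -> u a) -> G a.
Proof.
move=> Gf Gsub; apply: contrapT => nGa.
have [u [Gu uCa]] : exists u : Ul A, phi G u /\ u (~` a).
  apply: ultra_up => // f Gf'; rewrite complK => fa.
  exact/nGa/(filter_le Gf Gf' fa).
by apply/(ultra_compl u a).1 => //; apply: Gsub.
Qed.

Lemma phi_up_clopen a : stone_clopen (phi (up a)).
Proof.
split; first by exists (up a); split=> //; apply: up_filter.
exists (up (~` a)); split; first exact: up_filter.
apply: funext => u; apply: propext.
split=> [nua|/phi_up uCa /phi_up]; last exact/ultra_compl.
by apply/phi_up/ultra_compl => ua; apply/nua/phi_up.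
Qed.

End Filters.

Section ConditionalAlgebra.
Context {disp : Order.disp_t} {A : ctbDistrLatticeType disp}.
Variable imp : A -> A -> A.
Hypothesis CA : conditional_algebra imp.
Implicit Types (F : A -> Prop) (a b c : A) (u : Ul A).

Lemma imp_monor a b c : b <= c -> imp a b <= imp a c.
Proof. by case: CA => _ impI _ bc; rewrite -(meet_l bc) -impI leIr. Qed.

Lemma imp_antil a a' c : a <= a' -> imp a' c <= imp a c.
Proof.
case: CA => _ _ impU aa'; rewrite -(join_r aa').
exact: le_trans (impU a a' c) (leIl _ _).
Qed.

Lemma Dimp_filter u F : is_filter F -> is_filter (Dimp imp u F).
Proof.
case: CA => impT impI _ Ff; have uf := ultra_filter u; split.
- by exists \top; [exact: filterT|rewrite impT; exact: filterT].
- move=> x y [a Fa uax] xy; exists a => //.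
  exact: filter_le uf uax (imp_monor _ xy).
- move=> x y [a Fa uax] [b Fb uby]; exists (a `&` b); first exact: filterI.
  rewrite -impI; apply: (filterI uf).
  + exact: filter_le uf uax (imp_antil _ (leIl _ _)).
  + exact: filter_le uf uby (imp_antil _ (leIr _ _)).
Qed.

Lemma Dimp_up u a b : Dimp imp u (up a) b <-> u (imp a b).
Proof.
split=> [[a' aa' ua'b]|uab]; last by exists a; rewrite /up.
exact: filter_le (ultra_filter u) ua'b (imp_antil _ aa').
Qed.

End ConditionalAlgebra.

Section BooleanSubalgebra.
Context {disp : Order.disp_t} {A : ctbDistrLatticeType disp}.
Variable B : A -> Prop.
Hypothesis BS : boolean_subalgebra B.
Implicit Types (F H : A -> Prop) (a b : A) (u v w x y : Ul A).

Lemma E_B_refl u : E_B B u u.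
Proof. by []. Qed.

Lemma E_B_sym u v : E_B B u v -> E_B B v u.
Proof. by move=> Euv a Ba; split=> /(Euv a Ba). Qed.

Lemma E_B_trans u v w : E_B B u v -> E_B B v w -> E_B B u w.
Proof.
by move=> Euv Evw a Ba; split=> [/(Euv a Ba)/(Evw a Ba)|/(Evw a Ba)/(Euv a Ba)].
Qed.

Definition Btrace F : A -> Prop := fun b => exists2 c, B c /\ F c & c <= b.

Lemma in_Btrace F b : B b -> F b -> Btrace F b.
Proof. by exists b. Qed.

Lemma Btrace_filter F : is_filter F -> is_filter (Btrace F).
Proof.
have [_ BT BI _ _] := BS; move=> Ff; split.
- by apply: in_Btrace => //; exact: filterT.
- by move=> a b [c Fc ca] ab; exists c => //; apply: le_trans ab.
- move=> a b [c [Bc Fc] ca] [d [Bd Fd] db]; exists (c `&` d); last exact: leI2.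
  by split; [apply: BI|apply: filterI].
Qed.

Lemma E_B_of_Btrace u v : phi (Btrace u) v -> E_B B u v.
Proof.
have [_ _ _ _ BC] := BS; move=> uv a Ba.
split=> [ua|va]; first exact/uv/in_Btrace.
apply: contrapT => /(ultra_compl u a).2 uCa.
exact/(ultra_compl v a).1/va/uv/in_Btrace/uCa/BC.
Qed.

Lemma ultra_E_B_extend v H : is_filter H -> (forall b, B b -> H b -> v b) ->
  exists w : Ul A, phi H w /\ E_B B v w.
Proof.
have [_ _ _ _ BC] := BS; move=> Hf HBv.
have [w [Hw vw]] : exists w : Ul A, phi H w /\ phi (Btrace v) w.
  apply: ultra_sup (Btrace_filter (ultra_filter v)) _ => //.
  move=> f1 f2 Hf1 [e [Be ve] ef2] f12.
  have HCe : H (~` e) by apply: filter_le Hf Hf1 (le_trans f12 _); rewrite leC.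
  exact: (ultra_compl v e).1 (HBv _ (BC _ Be) HCe) ve.
by exists w; split=> //; apply: E_B_of_Btrace.
Qed.

Lemma E_B_boolean : boolean_equivalence (@stone_clopen _ A) (E_B B).
Proof.
have [_ _ _ _ BC] := BS; move=> u v nEuv.
have [a [Ba ua nva]] : exists a, [/\ B a, u a & ~ v a].
  apply: contrapT => nsep; apply: nEuv => a Ba.
  split=> [ua|va]; apply: contrapT => n; apply: nsep.
    by exists a.
  by exists (~` a); split; [exact: BC|exact/ultra_compl|move/ultra_compl].
exists (phi (up a)); split; [exact: phi_up_clopen| |exact/phi_up|by move/phi_up].
by move=> x y Exy /phi_up xa; apply/phi_up/(Exy a Ba).1.
Qed.

Section Imp.
Variable imp : A -> A -> A.
Hypothesis CA : conditional_algebra imp.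

Section ImpClosed.
Hypothesis Bimp : forall a b, B a -> B b -> B (imp a b).

Lemma Dimp_Btrace F x y b :
  E_B B x y -> B b -> Dimp imp y (Btrace F) b -> Dimp imp x F b.
Proof.
move=> Exy Bb [c [c' [Bc' Fc'] c'c] ycb]; exists c' => //.
apply/(Exy _ (Bimp Bc' Bb)).2.
exact: filter_le (ultra_filter y) ycb (imp_antil CA _ c'c).
Qed.

Lemma E_B_back_and_forth x x' y Y :   stone_closed Y -> E_B B x y -> T_A imp x Y x' ->
  exists y', E_B B x' y' /\ exists C,
    [/\ stone_closed C, T_A imp y C y' & E_preceq (E_B B) C Y].
Proof.
move=> _ Exy [F [Ff -> DF]].
have BFf := Btrace_filter Ff.
have [y' [Dy' Ey']] : exists y' : Ul A, phi (Dimp imp y (Btrace F)) y' /\ E_B B x' y'.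
  apply: ultra_E_B_extend (Dimp_filter CA y BFf) _ => b Bb.
  by move=> /(Dimp_Btrace Exy Bb); apply: DF.
exists y'; split=> //; exists (phi (Btrace F)); split; [by exists (Btrace F)..|].
move=> w wBF; have [z [Fz Ewz]] : exists z : Ul A, phi F z /\ E_B B w z.
  by apply: ultra_E_B_extend Ff _ => b Bb Fb; apply/wBF/in_Btrace.
by exists z => //; apply: E_B_sym.
Qed.

Lemma C_equivalence_E_B :
  C_equivalence (@stone_closed _ A) (@stone_clopen _ A) (T_A imp) (E_B B).
Proof.
split; [|exact: E_B_boolean|exact: E_B_back_and_forth].
by split; [exact: E_B_refl|split; [exact: E_B_sym|exact: E_B_trans]].
Qed.

End ImpClosed.

Lemma C_equivalence_Dimp_up a x x' y :
  C_equivalence (@stone_closed _ A) (@stone_clopen _ A) (T_A imp) (E_B B) ->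
  B a -> E_B B x y -> (forall b, x (imp a b) -> x' b) ->
  exists y', E_B B x' y' /\ forall b, y (imp a b) -> y' b.
Proof.
move=> [_ _ back_forth] Ba Exy Dx'.
have up_closed := (phi_up_clopen a).1.
have T_up : T_A imp x (phi (up a)) x'.
  by exists (up a); split=> [||b /(Dimp_up CA)]; [exact: up_filter| |exact: Dx'].
have [y' [Ey' [_ [_ [G [Gf -> DG]] preceq]]]] := back_forth _ _ _ _ up_closed Exy T_up.
have Ga : G a.
  apply: filter_of_phi_sub => // w /preceq[z /phi_up za Ezw].
  exact: (Ezw a Ba).1.
by exists y'; split=> // b yab; apply: DG; exists a.
Qed.

Lemma imp_closed_of_C_equivalence a b :
  C_equivalence (@stone_closed _ A) (@stone_clopen _ A) (T_A imp) (E_B B) ->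
  B a -> B b -> B (imp a b).
Proof.
move=> CE Ba Bb; apply: contrapT => nBc; set c := imp a b in nBc *.
have [y [yB yCc]] : exists y : Ul A, phi (Btrace (up c)) y /\ y (~` c).
  apply: ultra_up; first exact/Btrace_filter/up_filter.
  move=> f [d [Bd cd] df]; rewrite complK => fc; apply: nBc.
  suff -> : c = d by [].
  by apply/le_anti; rewrite cd (le_trans df fc).
have [x [/phi_up xc Eyx]] : exists x : Ul A, phi (up c) x /\ E_B B y x.
  by apply: ultra_E_B_extend; [exact: up_filter|move=> e Be ce; apply/yB/in_Btrace].
have [y' [Dy' y'Cb]] : exists y' : Ul A, phi (Dimp imp y (up a)) y' /\ y' (~` b).
  apply: ultra_up => [|f Df]; first exact/(Dimp_filter CA)/up_filter.
  rewrite complK => fb; apply: ((ultra_compl y c).1 yCc).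
  exact/(Dimp_up CA)/(filter_le (Dimp_filter CA y (up_filter a)) Df fb).
have [y'' [Ey'y'' Dy'']] := C_equivalence_Dimp_up CE Ba Eyx
  (fun b' yab' => Dy' b' ((Dimp_up CA y a b').2 yab')).
apply: ((ultra_compl y' b).1 y'Cb).
exact/(Ey'y'' b Bb).2/Dy''.
Qed.

End Imp.

End BooleanSubalgebra.

Theorem theorem7p5 (disp : Order.disp_t) (A : ctbDistrLatticeType disp)
  (imp : A -> A -> A) (B : A -> Prop) :
  conditional_algebra imp -> boolean_subalgebra B ->
  (C_equivalence (@stone_closed _ A) (@stone_clopen _ A) (T_A imp) (E_B B)
   <-> (forall a b, B a -> B b -> B (imp a b))).
Proof.
move=> CA BS; split=> [CE a b|Bimp].
  exact: (imp_closed_of_C_equivalence BS CA CE).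
exact: (C_equivalence_E_B BS CA Bimp).
Qed.
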